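(* Let $(n_0^{(m)},n_1^{(m)})_{m\ge 1}$ be a sequence of pairs of integers with $2\le n_0^{(m)}\le n_1^{(m)}$, $n_1^{(m)}\to\infty$, and $n_0^{(m)}=(\log n_1^{(m)})^{\omega(1)}$, i.e. $\frac{\log n_0^{(m)}}{\log\log n_1^{(m)}}\to\infty$ as $m\to\infty$. Writing $n_0=n_0^{(m)}$, $n_1=n_1^{(m)}$, let $k=\frac{\log n_1}{\log n_0}$ and let $x_0$ be the unique root of the equation $x-1-x^{\frac{k-1}{k}}=0$ in the interval $[1,\infty)$. Then $$ch(K_{n_0,n_1})\ge (1-o(1))\frac{\log n_1}{\log x_0}$$ as $m\to\infty$.
   Context: All logarithms are to base 2. For a graph $G=(V,E)$, the choice number $ch(G)$ is the minimum integer $k$ such that for every assignment of a list $S(v)$ of at least $k$ colors to each vertex $v\in V$, there is a proper vertex coloring of $G$ assigning to each vertex $v$ a color from $S(v)$. $K_{n_0,n_1}$ denotes the complete bipartite graph with parts of sizes $n_0$ and $n_1$. *)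

From Stdlib Require Import Reals ClassicalEpsilon.
From mathcomp Require Import all_boot.

Set Implicit Arguments.
Unset Strict Implicit.
Unset Printing Implicit Defensive.

Definition list_coloring (V : finType) (adj : rel V) (S : V -> seq nat) (c : V -> nat) : Prop :=
  (forall v, c v \in S v) /\ (forall u v, adj u v -> c u <> c v).

Definition choosable (V : finType) (adj : rel V) (k : nat) : Prop :=
  forall S : V -> seq nat,
    (forall v, uniq (S v) /\ (k <= size (S v))%N) ->
    exists c : V -> nat, list_coloring adj S c.

Definition choice_number (V : finType) (adj : rel V) : nat :=
  epsilon (inhabits 0%N)
    (fun k => choosable adj k /\ forall j, choosable adj j -> (k <= j)%N).

Definition Kbip (n0 n1 : nat) : rel ('I_n0 + 'I_n1)%type :=
  fun u v => match u, v with
             | inl _, inr _ => true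
             | inr _, inl _ => true
             | _, _ => false
             end.

Definition log2 (x : R) : R := Rdiv (ln x) (ln 2).
Arguments Kbip n0 n1 : clear implicits.

From Stdlib Require Import Reals Lra ZArith Classical ClassicalEpsilon.
From mathcomp Require Import all_boot zify.

(* Give every vertex a list drawn from the s-subsets of a palette of N colours.  A
   proper colouring determines the set C of colours used on the n0-side: every n0-list
   meets C and every n1-list leaves C.  If for every size j = |C| a random s-set lies
   in a fixed j-set with probability >= N/n1, or misses it with probability >= N/n0
   ([balanced]), then for each C only a fraction e^-N < 2^-N of the assignments is
   compatible with C, and a union bound over the 2^N sets C leaves a non-colourable
   assignment.  For s just below (1 - eps) log n1 / log x0 and N ~ 40 (ln n1)^2 / eps,
   balance follows from the root equation 1/x0 + x0^(-log n0 / log n1) = 1 together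
   with log N = o(log n0). *)

Set Implicit Arguments.
Unset Strict Implicit.

Lemma choosable_leq (V : finType) (adj : rel V) k j :
  choosable adj k -> (k <= j)%N -> choosable adj j.
Proof.
move=> k_ch le_kj S S_size; apply: k_ch => v; have [S_uniq le_jS] := S_size v.
by split=> //; apply: leq_trans le_kj le_jS.
Qed.

Lemma choice_numberP (V : finType) (adj : rel V) k :
  choosable adj k ->
  choosable adj (choice_number adj) /\
  forall j, choosable adj j -> (choice_number adj <= j)%N.
Proof.
move=> k_ch; apply: (epsilon_spec (inhabits 0%N)
  (fun k => choosable adj k /\ forall j, choosable adj j -> (k <= j)%N)).
have [n [[n_ch n_min] _]] := dec_inh_nat_subset_has_unique_least_element
  (choosable adj) (fun j => classic _) (ex_intro _ k k_ch).
by exists n; split=> // j /n_min /leP.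
Qed.

Lemma choice_number_gt (V : finType) (adj : rel V) k s :
  choosable adj k -> ~ choosable adj s -> (s < choice_number adj)%N.
Proof.
move=> /choice_numberP [ch_ch _] not_s_ch; rewrite ltnNge; apply/negP => le_ch_s.
exact: not_s_ch (choosable_leq ch_ch le_ch_s).
Qed.

Lemma uniq_notin_exists (T : eqType) (s t : seq T) :
  uniq s -> (size t < size s)%N -> exists2 x, x \in s & x \notin t.
Proof.
move=> us lt; apply/allPn; apply: contraTN lt => /allP sub.
by rewrite -leqNgt uniq_leq_size.
Qed.

(* Colour side 0 by the heads of its lists; each list of side 1 has n0 + 1
   colours, so one of them is still unused. *)
Lemma choosable_Kbip n0 n1 : choosable (Kbip n0 n1) n0.+1.
Proof.
move=> S S_size.
pose c0 a := head 0%N (S (inl a)).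
pose used := [seq c0 a | a <- enum 'I_n0].
have fresh b : exists x, (x \in S (inr b)) && (x \notin used).
  have [S_uniq S_large] := S_size (inr b).
  have [x xS xu] : exists2 x, x \in S (inr b) & x \notin used.
    by apply: uniq_notin_exists; rewrite // size_map size_enum_ord.
  by exists x; rewrite xS.
pose c1 b := xchoose (fresh b).
have c1P b : (c1 b \in S (inr b)) && (c1 b \notin used) := xchooseP (fresh b).
have c0_used a : c0 a \in used by rewrite map_f ?mem_enum.
exists (fun v => match v with inl a => c0 a | inr b => c1 b end); split.
  case=> [a|b]; last by case/andP: (c1P b).
  by have [_] := S_size (inl a); rewrite /c0; case: (S (inl a)) => //= x l _; rewrite mem_head.
case=> [a|b] [a'|b'] //= _ E.
  by case/andP: (c1P b'); rewrite -E c0_used.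
by case/andP: (c1P b); rewrite E c0_used.
Qed.

Lemma Kbip_not_choosable0 n0 n1 : (0 < n0)%N -> ~ choosable (Kbip n0 n1) 0.
Proof.
move=> n0_gt0 ch0; have [c [cS _]] := ch0 (fun _ => [::]) (fun _ => conj isT isT).
by have := cS (inl (Ordinal n0_gt0)).
Qed.

Lemma choice_number_Kbip_gt n0 n1 s :
  ~ choosable (Kbip n0 n1) s -> (s < choice_number (Kbip n0 n1))%N.
Proof. exact/choice_number_gt/choosable_Kbip. Qed.

Lemma leq_card_bigcup (T I : finType) (F : I -> {set T}) :
  (#|\bigcup_(i : I) F i| <= \sum_(i : I) #|F i|)%N.
Proof.
rewrite -big_enum /= -[X in (_ <= X)%N]big_enum /=.
elim: (enum I) => [|i r IH]; first by rewrite !big_nil cards0.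
by rewrite !big_cons; apply: leq_trans (leq_card_setU _ _) _; rewrite leq_add2l.
Qed.

Lemma card_set_of (T : finType) : #|{set T}| = (2 ^ #|T|)%N.
Proof. by rewrite -cardsT -card_powerset powersetT cardsT. Qed.

Lemma leq_expn2r m n e : (m <= n)%N -> (m ^ e <= n ^ e)%N.
Proof. by move=> le_mn; elim: e => [|e IH]; rewrite ?expn0 // !expnS leq_mul. Qed.

Lemma expn_subn_bin_le N j s : (j <= N)%N ->
  ((j - s) ^ s * 'C(N, s) <= 'C(j, s) * N ^ s)%N.
Proof.
move=> le_jN; rewrite -(@leq_pmul2r s`!) ?fact_gt0 // -mulnA bin_ffact.
rewrite mulnAC bin_ffact mulnC [X in (_ <= X)%N]mulnC !ffact_prod.
have pow_prod c : (c ^ s = \prod_(i < s) c)%N by rewrite prod_nat_const card_ord.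
rewrite !pow_prod; apply: leq_mul; apply: leq_prod => i _.
  exact: leq_subr.
by rewrite leq_sub2l // ltnW.
Qed.

Local Open Scope R_scope.

Lemma INR_muln m n : INR (m * n) = INR m * INR n.
Proof. by rewrite mulnE mult_INR. Qed.

Lemma INR_subn m n : (n <= m)%N -> INR (m - n) = INR m - INR n.
Proof. by move/leP=> le_nm; rewrite subnE minus_INR. Qed.

Lemma INR_expn m n : INR (m ^ n)%N = INR m ^ n.
Proof. by elim: n => [|n IH]; rewrite ?expn0 // expnS INR_muln IH. Qed.

Lemma INR_leq m n : (m <= n)%N -> INR m <= INR n.
Proof. by move/leP/le_INR. Qed.

Lemma leq_INR m n : INR m <= INR n -> (m <= n)%N.
Proof. by move/INR_le/leP. Qed.

Lemma ltn_INR m n : INR m < INR n -> (m < n)%N.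
Proof. by move/INR_lt/ltP. Qed.

Lemma exp_le x y : x <= y -> exp x <= exp y.
Proof. by case/Rle_lt_or_eq_dec => [/exp_increasing/Rlt_le | ->] //; lra. Qed.

Lemma ln_le x y : 0 < x -> x <= y -> ln x <= ln y.
Proof. by move=> x_gt0 /Rle_lt_or_eq_dec [/(ln_increasing _ _ x_gt0)/Rlt_le | ->] //; lra. Qed.

Lemma exp_pow x n : exp x ^ n = exp (INR n * x).
Proof.
elim: n => [|n IH]; first by rewrite /= Rmult_0_l exp_0.
by rewrite S_INR /= IH -exp_plus; f_equal; lra.
Qed.

Lemma ln2_lt_1 : ln 2 < 1.
Proof.
rewrite -(ln_exp 1); apply: ln_increasing; first lra.
by have := exp_ineq1 1; lra.
Qed.

Lemma ln2_bounds : / 2 < ln 2 < 1.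
Proof. by split; [exact: ln_lt_2 | exact: ln2_lt_1]. Qed.

Lemma pow2_lt_exp N : (0 < N)%N -> 2 ^ N < exp (INR N).
Proof.
move=> N_gt0; rewrite -Rpower_pow; last lra.
apply: exp_increasing; have := lt_0_INR N (elimT ltP N_gt0); have := ln2_lt_1; nra.
Qed.

Lemma pow_one_sub_le_exp u n : u <= 1 -> (1 - u) ^ n <= exp (- (INR n * u)).
Proof.
move=> u_le1; rewrite (_ : - _ = INR n * - u); last ring.
rewrite -exp_pow; apply: pow_incr.
by have := exp_ineq1_le (- u); lra.
Qed.

(* With u = c/M: (1 - u)^n <= e^(-nu) <= e^(-N) < 2^(-N). *)
Lemma subn_expn_decay (M c n N : nat) : (0 < M)%N -> (c <= M)%N -> (0 < N)%N ->
  (N * M <= n * c)%N -> ((M - c) ^ n * 2 ^ N < M ^ n)%N.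
Proof.
move=> M_gt0 le_cM N_gt0 NM_le; apply: ltn_INR.
rewrite INR_muln !INR_expn INR_subn // [INR 2]/= (_ : 1 + 1 = 2); last lra.
have MR : 0 < INR M by apply: lt_0_INR; apply/ltP.
have cMR := INR_leq le_cM.
have NMR := INR_leq NM_le; rewrite !INR_muln in NMR.
set u := INR c / INR M.
have -> : INR M - INR c = INR M * (1 - u) by rewrite /u; field; lra.
have uM : u * INR M = INR c by rewrite /u; field; lra.
have u_le1 : u <= 1 by nra.
have nu_ge : INR N <= INR n * u by nra.
have decay : (1 - u) ^ n * 2 ^ N < 1.
  have le_expN : (1 - u) ^ n <= exp (- INR N).
    exact: Rle_trans (pow_one_sub_le_exp n u_le1) (exp_le (Ropp_le_contravar _ _ nu_ge)).
  apply: Rle_lt_trans (Rmult_le_compat_r _ _ _ (pow_le 2 N ltac:(lra)) le_expN) _.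
  rewrite exp_Ropp -(Rinv_l (exp (INR N))); last exact: exp_neq_0.
  by apply: Rmult_lt_compat_l; [apply: Rinv_0_lt_compat; apply: exp_pos | apply: pow2_lt_exp].
rewrite Rpow_mult_distr; have := pow_lt _ n MR; nra.
Qed.

Definition balanced (n0 n1 N s : nat) :=
  forall j, (j <= N)%N ->
    (N * 'C(N, s) <= n1 * 'C(j, s))%N \/ (N * 'C(N, s) <= n0 * 'C(N - j, s))%N.

Section ListAssignments.

Variables n0 n1 N s : nat.

Local Notation palette := 'I_N.
Local Notation side0 := {ffun 'I_n0 -> {set palette}}.
Local Notation side1 := {ffun 'I_n1 -> {set palette}}.

Let draws : {set {set palette}} := [set B : {set palette} | #|B| == s].
Let hitting (C : {set palette}) := [set B in draws | B :&: C != set0].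
Let escaping (C : {set palette}) := [set B in draws | ~~ (B \subset C)].

Let lists_on (P0 P1 : {set {set palette}}) : {set side0 * side1} :=
  setX [set f : side0 | f \in ffun_on (mem P0)] [set f : side1 | f \in ffun_on (mem P1)].

Let card_lists_on P0 P1 : #|lists_on P0 P1| = (#|P0| ^ n0 * #|P1| ^ n1)%N.
Proof.
rewrite cardsX !cardsE !card_ffun_on !card_ord.
by congr (_ ^ _ * _ ^ _)%N; apply: eq_card => B; rewrite !inE.
Qed.

Let card_all_draws : #|draws| = 'C(N, s).
Proof. by rewrite card_draws card_ord. Qed.

Let card_draws_sub (X : {set palette}) :
  #|draws :&: [set B : {set palette} | B \subset X]| = 'C(#|X|, s).
Proof.
rewrite -cards_draws; apply: eq_card => B; rewrite !inE andbC.
by case: (#|B| == s); rewrite ?andbT ?andbF.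
Qed.

Let card_hitting C : (#|hitting C| + 'C(N - #|C|, s) = 'C(N, s))%N.
Proof.
rewrite -card_all_draws -(cardsID [set B : {set palette} | B \subset ~: C] draws) addnC.
congr (_ + _)%N.
  have -> : (N - #|C| = #|~: C|)%N by have := cardsC C; rewrite card_ord; lia.
  by rewrite card_draws_sub.
apply: eq_card => B; rewrite !inE andbC; congr (_ && _).
by rewrite setI_eq0 disjoints_subset.
Qed.

Let card_escaping C : (#|escaping C| + 'C(#|C|, s) = 'C(N, s))%N.
Proof.
rewrite -card_all_draws -(cardsID [set B : {set palette} | B \subset C] draws) addnC.
congr (_ + _)%N; first by rewrite card_draws_sub.
by apply: eq_card => B; rewrite !inE andbC.
Qed.

Hypothesis N_gt0 : (0 < N)%N.
Hypothesis le_sN : (s <= N)%N.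
Hypothesis balanced_nN : balanced n0 n1 N s.

(* By [balanced], a side-1 draw lies in C with probability >= N/n1, or a side-0
   draw misses C with probability >= N/n0; all lists of that side avoid this
   event with probability <= e^-N < 2^-N. *)
Let card_blocked_lt C :
  (#|lists_on (hitting C) (escaping C)| * 2 ^ N < #|lists_on draws draws|)%N.
Proof.
rewrite !card_lists_on card_all_draws.
have Cs_gt0 : (0 < 'C(N, s))%N by rewrite bin_gt0.
have le_CN : (#|C| <= N)%N by rewrite -[X in (_ <= X)%N](card_ord N) max_card.
have hit := card_hitting C; have esc := card_escaping C.
have hit_le : (#|hitting C| <= 'C(N, s))%N by rewrite -hit leq_addr.
have esc_le : (#|escaping C| <= 'C(N, s))%N by rewrite -esc leq_addr.
case: (balanced_nN le_CN) => bal.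
  have c_le : ('C(#|C|, s) <= 'C(N, s))%N by rewrite -esc leq_addl.
  have decay := subn_expn_decay Cs_gt0 c_le N_gt0 bal.
  rewrite -{1}esc addnK in decay.
  rewrite -mulnA; apply: leq_ltn_trans (leq_mul (leq_expn2r n0 hit_le) (leqnn _)) _.
  by rewrite ltn_pmul2l ?expn_gt0 ?Cs_gt0.
have c_le : ('C(N - #|C|, s) <= 'C(N, s))%N by rewrite -hit leq_addl.
have decay := subn_expn_decay Cs_gt0 c_le N_gt0 bal.
rewrite -{1}hit addnK in decay.
rewrite mulnAC [X in (_ < X)%N]mulnC.
apply: leq_ltn_trans (leq_mul (leqnn _) (leq_expn2r n1 esc_le)) _.
by rewrite mulnC ltn_pmul2l ?expn_gt0 ?Cs_gt0.
Qed.

Let exists_unblocked : exists2 p, p \in lists_on draws draws &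
  forall C, p \notin lists_on (hitting C) (escaping C).
Proof.
have lt : (#|\bigcup_C lists_on (hitting C) (escaping C)| < #|lists_on draws draws|)%N.
  apply: leq_ltn_trans (leq_card_bigcup _) _.
  have pow_gt0 : (0 < 2 ^ N)%N by rewrite expn_gt0.
  have all_gt0 : (0 < #|lists_on draws draws|)%N.
    exact: leq_ltn_trans (leq0n _) (card_blocked_lt set0).
  rewrite -(ltn_pmul2r pow_gt0) big_distrl /=.
  apply: (@leq_ltn_trans (\sum_(C : {set palette}) #|lists_on draws draws|.-1)).
    by apply: leq_sum => C _; rewrite -ltnS prednK //; apply: card_blocked_lt.
  by rewrite sum_nat_const card_set_of card_ord mulnC ltn_pmul2r // ltn_predL.
have [p p_all p_unb] : exists2 p, p \in lists_on draws draws &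
    p \notin \bigcup_C lists_on (hitting C) (escaping C).
  apply/subsetPn; apply: contraTN lt => /subset_leq_card; by rewrite -leqNgt.
by exists p => // C; apply: contra p_unb => p_bl; apply/bigcupP; exists C.
Qed.

Lemma Kbip_not_choosable : ~ choosable (Kbip n0 n1) s.
Proof.
move=> Kbip_ch; have [[f0 f1] f_draws f_unb] := exists_unblocked.
move: f_draws; rewrite !inE => /andP [/ffun_onP /= f0_draws /ffun_onP /= f1_draws].
have f0s a : #|f0 a| == s by move: (f0_draws a); rewrite inE.
have f1s b : #|f1 b| == s by move: (f1_draws b); rewrite inE.
pose S v := match v with
            | inl a => map val (enum (f0 a))
            | inr b => map val (enum (f1 b)) end.
have S_draw (B : {set palette}) : B \in draws ->
    uniq (map val (enum B)) /\ (s <= size (map val (enum B)))%N.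
  rewrite inE => /eqP cardB; split; first by rewrite (map_inj_uniq val_inj) enum_uniq.
  by rewrite size_map -cardE cardB.
have [c [cS c_proper]] : exists c, list_coloring (Kbip n0 n1) S c.
  by apply: Kbip_ch => -[a|b]; apply: S_draw; [apply: f0_draws | apply: f1_draws].
pose C : {set palette} := [set x | [exists a, c (inl a) == val x]].
apply: (negP (f_unb C)); rewrite !inE; apply/andP; split; apply/ffun_onP.
  move=> a /=; rewrite !inE f0s; apply/set0Pn.
  have /mapP [x x_f0 cx] := cS (inl a).
  by exists x; rewrite !inE -mem_enum x_f0; apply/existsP; exists a; apply/eqP.
move=> b /=; rewrite !inE f1s; apply/subsetPn.
have /mapP [y y_f1 cy] := cS (inr b).
exists y; first by rewrite -mem_enum.
rewrite inE; apply/existsP => -[a /eqP ca].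
by apply: (c_proper (inl a) (inr b)); rewrite // ca cy.
Qed.

End ListAssignments.

Lemma pow_gap_identity (n N s : nat) : (0 < n)%N -> (0 < N)%N -> (0 < s)%N ->
  INR n * (INR N * exp ((ln (INR N) - ln (INR n)) / INR s)) ^ s = INR N ^ s.+1.
Proof.
move=> /ltP/lt_0_INR n_gt0 /ltP/lt_0_INR N_gt0 /ltP/lt_0_INR s_gt0.
rewrite Rpow_mult_distr exp_pow (_ : INR s * _ = ln (INR N) - ln (INR n)); last by field; lra.
rewrite exp_plus exp_Ropp !exp_ln //=; field; lra.
Qed.

Lemma bin_le_of_gap (n N s j : nat) :
  (0 < n)%N -> (0 < N)%N -> (0 < s)%N -> (j <= N)%N ->
  INR N * exp ((ln (INR N) - ln (INR n)) / INR s) <= INR j - INR s ->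
  (N * 'C(N, s) <= n * 'C(j, s))%N.
Proof.
move=> n_gt0 N_gt0 s_gt0 le_jN gap.
have g_ge0 : 0 <= INR N * exp ((ln (INR N) - ln (INR n)) / INR s).
  by apply: Rmult_le_pos; [apply: pos_INR | apply: Rlt_le; apply: exp_pos].
have le_sj : (s <= j)%N by apply: leq_INR; lra.
have pow_bound : (N ^ s.+1 <= n * (j - s) ^ s)%N.
  apply: leq_INR; rewrite INR_muln !INR_expn INR_subn // -(pow_gap_identity n_gt0 N_gt0 s_gt0).
  apply: Rmult_le_compat_l; first exact: pos_INR.
  by apply: pow_incr; split.
rewrite -(@leq_pmul2r (N ^ s)) ?expn_gt0 ?N_gt0 //.
apply: leq_trans (_ : n * (j - s) ^ s * 'C(N, s) <= _)%N.
  by rewrite mulnAC -expnS leq_mul2r pow_bound orbT.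
by rewrite -!mulnA leq_mul2l expn_subn_bin_le ?orbT.
Qed.

Lemma balanced_of_real (n0 n1 N s : nat) :
  (0 < n0)%N -> (0 < n1)%N -> (0 < N)%N -> (0 < s)%N ->
  INR N * (exp ((ln (INR N) - ln (INR n1)) / INR s)
           + exp ((ln (INR N) - ln (INR n0)) / INR s)) + 2 * INR s <= INR N ->
  balanced n0 n1 N s.
Proof.
move=> n0_gt0 n1_gt0 N_gt0 s_gt0 room j le_jN.
have [gap1 | gap0] :=
  Rle_or_lt (INR N * exp ((ln (INR N) - ln (INR n1)) / INR s)) (INR j - INR s).
  by left; apply: bin_le_of_gap.
by right; apply: bin_le_of_gap; rewrite ?leq_subr // INR_subn //; nra.
Qed.

(* Split e^-t = e^-t0 e^-(t - t0) and use the root equation at t0. *)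
Lemma sum_exp_root_le q t0 t eps : 0 <= q <= 1 -> 0 <= eps -> 0 <= t ->
  0 <= t0 <= (1 - eps) * t -> exp (- t0) + exp (- (q * t0)) = 1 ->
  exp (- t) + exp (- (q * t)) <= exp (- (q * (eps * t))).
Proof.
move=> q01 eps_ge0 t_ge0 t0_le root.
have tail_gt0 := exp_pos (- (q * (t - t0))).
have t0_le_t : t0 <= t by nra.
have first_le : exp (- t) <= exp (- t0) * exp (- (q * (t - t0))).
  rewrite -exp_plus; apply: exp_le.
  have : 0 <= (1 - q) * (t - t0) by apply: Rmult_le_pos; lra.
  lra.
have second_eq : exp (- (q * t)) = exp (- (q * t0)) * exp (- (q * (t - t0))).
  by rewrite -exp_plus; f_equal; ring.
have tail_le : exp (- (q * (t - t0))) <= exp (- (q * (eps * t))) by apply: exp_le; nra.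
nra.
Qed.

Lemma mul_exp_neg_add_le x y D : 0 <= x -> 0 <= D -> y * (1 + D) <= x * D ->
  x * exp (- D) + y <= x.
Proof.
move=> x_ge0 D_ge0 yD.
have e_le : exp (- D) * (1 + D) <= 1.
  have : exp (- D) * exp D = 1 by rewrite -exp_plus Rplus_opp_l exp_0.
  have := exp_ineq1_le D; have := exp_pos (- D); nra.
apply: (Rmult_le_reg_r (1 + D)); first lra.
nra.
Qed.

Lemma palette_condition (L l t0 eps : R) (s N : nat) :
  0 < eps < 1 -> / 2 <= l <= L -> 0 <= t0 ->
  exp (- t0) + exp (- (l / L * t0)) = 1 ->
  (0 < s)%N -> INR s * t0 <= (1 - eps) * L -> INR s <= 2 * L ->
  40 * L ^ 2 <= eps * INR N -> ln (INR N) <= eps * l / 2 ->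
  INR N * (exp ((ln (INR N) - L) / INR s) + exp ((ln (INR N) - l) / INR s))
    + 2 * INR s <= INR N.
Proof.
move=> eps01 l_bounds t0_ge0 root /ltP/lt_0_INR s_gt0 st0_le s_le N_ge lnN_le.
set S := INR s in s_gt0 st0_le s_le *.
(* At t = L/s and q = l/L the root equation gains a factor e^(-eps l/s); half of
   it pays for N^(1/s) <= e^(eps l/(2s)), the other half, e^(-D), absorbs 2s. *)
set q := l / L in root; set t := L / S; set D := eps * l / (2 * S).
have qL : q * L = l by rewrite /q; field; lra.
have q01 : 0 <= q <= 1 by split; nra.
have t_ge0 : 0 <= t by apply: Rlt_le; apply: Rdiv_lt_0_compat; lra.
have t0_le : t0 <= (1 - eps) * t.
  apply: (Rmult_le_reg_l S) => //; rewrite /t; field_simplify; lra.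
have sum_le := sum_exp_root_le q01 (Rlt_le _ _ (proj1 eps01)) t_ge0 (conj t0_ge0 t0_le) root.
have sum_le_D : exp ((ln (INR N) - L) / S) + exp ((ln (INR N) - l) / S) <= exp (- D).
  have -> : (ln (INR N) - L) / S = ln (INR N) / S + - t by rewrite /t; field; lra.
  have -> : (ln (INR N) - l) / S = ln (INR N) / S + - (q * t) by rewrite /q /t; field; lra.
  rewrite !exp_plus -Rmult_plus_distr_l.
  apply: Rle_trans (Rmult_le_compat_l _ _ _ (Rlt_le _ _ (exp_pos _)) sum_le) _.
  rewrite -exp_plus; apply: exp_le.
  have -> : q * (eps * t) = eps * l / S by rewrite /q /t; field; lra.
  rewrite /D; apply: (Rmult_le_reg_l S) => //; field_simplify; lra.
have N_gt0 : 0 < INR N by nra.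
apply: Rle_trans (Rplus_le_compat_r _ _ _ (Rmult_le_compat_l _ _ _ (Rlt_le _ _ N_gt0) sum_le_D)) _.
apply: mul_exp_neg_add_le; first lra.
  by apply: Rlt_le; rewrite /D; apply: Rdiv_lt_0_compat; nra.
apply: (Rmult_le_reg_r (2 * S)); first lra.
have -> : 2 * S * (1 + D) * (2 * S) = 4 * S ^ 2 + 2 * S * (eps * l).
  by rewrite /D; field; lra.
have -> : INR N * D * (2 * S) = eps * INR N * l by rewrite /D; field; lra.
have : 4 * S ^ 2 <= 16 * L ^ 2 by nra.
have epsl_le : eps * l <= L by nra.
have : 2 * S * (eps * l) <= 2 * S * L by apply: Rmult_le_compat_l; lra.
nra.
Qed.

Lemma ln_palette_le (L l eps : R) (N : nat) :
  0 < eps < 1 -> 4 <= L / ln 2 ->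
  2 * (8 + ln (/ eps)) / eps <= l / ln (L / ln 2) ->
  0 < INR N <= 40 * L ^ 2 / eps + 1 -> ln (INR N) <= eps * l / 2.
Proof.
move=> eps01 L4 growth N_bounds; have ln2_b := ln2_bounds.
set u := L / ln 2 in L4 growth.
have L_eq : L = u * ln 2 by rewrite /u; field; lra.
have L_ge2 : 2 <= L by nra.
have ln4 : ln 4 = 2 * ln 2 by rewrite (_ : 4 = 2 * 2); [rewrite ln_mult; lra | lra].
have lnu_ge1 : 1 <= ln u by have := ln_le (ltac:(lra) : 0 < 4) L4; lra.
have lnL_le : ln L <= ln u by apply: ln_le; nra.
have B_le : 2 * (8 + ln (/ eps)) / eps * ln u <= l.
  have := Rmult_le_compat_r (ln u) _ _ (ltac:(lra)) growth.
  by rewrite (_ : l / ln u * ln u = l); [lra | field; lra].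
have ln_inv_eps : 0 <= ln (/ eps).
  by rewrite ln_Rinv; [have := ln_increasing _ _ (proj1 eps01) (proj2 eps01); rewrite ln_1 |]; lra.
have ln41 : ln 41 <= 6.
  have := ln_le (ltac:(lra) : 0 < 41) (ltac:(lra) : 41 <= 2 ^ 6).
  by rewrite ln_pow; [rewrite [INR 6]/=; lra | lra].
have inv_eps : 1 < / eps by rewrite -Rinv_1; apply: Rinv_lt_contravar; lra.
have lnN_le : ln (INR N) <= ln 41 + 2 * ln L + ln (/ eps).
  have N_le : INR N <= 41 * L ^ 2 * / eps by rewrite /Rdiv in N_bounds; nra.
  have := ln_le (proj1 N_bounds) N_le.
  by rewrite !ln_mult ?ln_1; nra.
have : eps * (2 * (8 + ln (/ eps)) / eps * ln u) / 2 = (8 + ln (/ eps)) * ln u.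
  by field; lra.
nra.
Qed.

Lemma nat_floor r : 0 <= r -> exists n : nat, INR n <= r < INR n + 1.
Proof.
move=> r_ge0; have z_ge0 := Zfloor_lub 0 r r_ge0.
exists (Z.to_nat (Zfloor r)); rewrite INR_IZR_INZ (Z2Nat.id _ z_ge0).
exact: Zfloor_bound.
Qed.

Lemma nat_ceil r : 0 <= r -> exists n : nat, r <= INR n <= r + 1.
Proof. by move=> /nat_floor [n n_bounds]; exists n.+1; rewrite S_INR; lra. Qed.

Lemma log2_div_log2 x y : log2 x / log2 y = ln x / ln y.
Proof.
have ln2_neq0 : ln 2 <> 0 by have := ln_lt_2; lra.
rewrite /log2; have [->|lny_neq0] := Req_dec (ln y) 0; last by field.
by rewrite Rdiv_0_l !Rdiv_0_r.
Qed.

Lemma root_exp_equation k x : 1 <= k -> 1 <= x ->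
  x - 1 - Rpower x ((k - 1) / k) = 0 ->
  ln 2 <= ln x /\ exp (- ln x) + exp (- (ln x / k)) = 1.
Proof.
move=> k_ge1 x_ge1 root.
have lnx_ge0 : 0 <= ln x by rewrite -ln_1; apply: ln_le; lra.
have expo_ge0 : 0 <= (k - 1) / k * ln x.
  by apply: Rmult_le_pos => //; apply: Rmult_le_pos; [lra | apply: Rlt_le; apply: Rinv_0_lt_compat; lra].
have pow_ge1 : 1 <= Rpower x ((k - 1) / k) by rewrite -[X in X <= _]exp_0; apply: exp_le.
split; first by apply: ln_le; lra.
have pow_eq : Rpower x ((k - 1) / k) = x * exp (- (ln x / k)).
  by rewrite /Rpower -{2}(exp_ln x) -?exp_plus; [f_equal; field | ]; lra.
have inv_x : exp (- ln x) * x = 1.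
  by rewrite -{2}(exp_ln x) -?exp_plus ?Rplus_opp_l ?exp_0; lra.
rewrite pow_eq in root; have := f_equal (Rmult (exp (- ln x))) root; nra.
Qed.

Section KbipLowerBound.

Variables (a b : nat) (eps t0 : R).
Hypotheses (eps_gt0 : 0 < eps) (le_2a : (2 <= a)%N) (le_ab : (a <= b)%N) (b_ge16 : 16 <= INR b).
Hypothesis growth : 2 * (8 + ln (/ eps)) / eps <= ln (INR a) / ln (log2 (INR b)).
Hypotheses (t0_ge : ln 2 <= t0)
  (root : exp (- t0) + exp (- (ln (INR a) / ln (INR b) * t0)) = 1).

Let ln2_b : / 2 < ln 2 < 1 := ln2_bounds.

Let a_ge2 : 2 <= INR a.
Proof. by have := INR_leq le_2a; rewrite [INR 2]/=; lra. Qed.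

Let lna_ge : ln 2 <= ln (INR a).
Proof. by apply: ln_le; lra. Qed.

Let lna_le : ln (INR a) <= ln (INR b).
Proof. by apply: ln_le; [lra | apply: INR_leq]. Qed.

Let log2b_ge4 : 4 <= log2 (INR b).
Proof.
have lnb_ge : 4 * ln 2 <= ln (INR b).
  have := ln_le (ltac:(simpl; lra) : 0 < 2 ^ 4) (ltac:(simpl; lra) : 2 ^ 4 <= INR b).
  by rewrite ln_pow; [rewrite [INR 4]/=; lra | lra].
rewrite /log2 (_ : 4 = 4 * ln 2 / ln 2); last by field; lra.
by apply: Rmult_le_compat_r => //; apply: Rlt_le; apply: Rinv_0_lt_compat; lra.
Qed.

Lemma Kbip_not_choosable_of_root (s : nat) : eps < 1 ->
  (0 < s)%N -> INR s * t0 <= (1 - eps) * ln (INR b) -> ~ choosable (Kbip a b) s.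
Proof.
move=> eps_lt1 s_gt0 st0_le; have eps01 : 0 < eps < 1 by [].
have L_ge2 : 2 <= ln (INR b).
  have : ln (INR b) = log2 (INR b) * ln 2 by rewrite /log2; field; lra.
  by have := log2b_ge4; nra.
have s_le : INR s <= 2 * ln (INR b) by nra.
have bound_ge0 : 0 <= 40 * ln (INR b) ^ 2 / eps.
  by apply: Rmult_le_pos; [nra | apply: Rlt_le; apply: Rinv_0_lt_compat; lra].
have [N [N_ge N_le]] := nat_ceil bound_ge0.
have epsN_ge : 40 * ln (INR b) ^ 2 <= eps * INR N.
  by move: N_ge; rewrite /Rdiv => N_ge; have := Rinv_r eps; nra.
have NR_gt0 : 0 < INR N by nra.
have lnN_le := ln_palette_le eps01 log2b_ge4 growth (conj NR_gt0 N_le).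
have room := palette_condition eps01 (conj (ltac:(lra) : / 2 <= ln (INR a)) lna_le)
  (ltac:(lra) : 0 <= t0) root s_gt0 st0_le s_le epsN_ge lnN_le.
have a_gt0 : (0 < a)%N := ltnW le_2a.
have b_gt0 : (0 < b)%N := leq_trans a_gt0 le_ab.
have N_gt0 : (0 < N)%N by apply: ltn_INR.
apply: Kbip_not_choosable N_gt0 _ (balanced_of_real a_gt0 b_gt0 N_gt0 s_gt0 room).
by apply: leq_INR; nra.
Qed.

Lemma choice_number_Kbip_ge :
  (1 - eps) * ln (INR b) / t0 <= INR (choice_number (Kbip a b)).
Proof.
have t0_inv_gt0 : 0 < / t0 by apply: Rinv_0_lt_compat; lra.
have lnb_ge0 : 0 <= ln (INR b) by lra.
have := pos_INR (choice_number (Kbip a b)); rewrite /Rdiv.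
have [eps_ge1 | eps_lt1] := Rle_lt_dec 1 eps.
  have : (1 - eps) * ln (INR b) <= 0 by nra.
  nra.
have r_ge0 : 0 <= (1 - eps) * ln (INR b) * / t0.
  by apply: Rmult_le_pos; [apply: Rmult_le_pos | apply: Rlt_le]; lra.
have [s [s_le r_lt]] := nat_floor r_ge0.
have lt_s_ch : (s < choice_number (Kbip a b))%N.
  apply: choice_number_Kbip_gt; case: s s_le {r_lt} => [|s] s_le.
    exact/Kbip_not_choosable0/ltnW.
  apply: Kbip_not_choosable_of_root => //.
  have : / t0 * t0 = 1 by field; lra.
  nra.
by have := INR_leq lt_s_ch; rewrite S_INR; lra.
Qed.

End KbipLowerBound.

Theorem theorem3 (n0 n1 : nat -> nat) :
  (forall m, (2 <= n0 m)%N /\ (n0 m <= n1 m)%N) ->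
  (forall B : R, exists M : nat, forall m, (M <= m)%N -> B <= INR (n1 m)) ->
  (forall B : R, exists M : nat, forall m, (M <= m)%N ->
       B <= log2 (INR (n0 m)) / log2 (log2 (INR (n1 m)))) ->
  forall eps : R, 0 < eps ->
  exists M : nat, forall m, (M <= m)%N ->
    let k := log2 (INR (n1 m)) / log2 (INR (n0 m)) in
    forall x0 : R, 1 <= x0 -> x0 - 1 - Rpower x0 ((k - 1) / k) = 0 ->
      (1 - eps) * (log2 (INR (n1 m)) / log2 x0)
        <= INR (choice_number (Kbip (n0 m) (n1 m))).
Proof.
move=> sizes n1_large ratio_large eps eps_gt0.
have [M1 M1P] := n1_large 16.
have [M2 M2P] := ratio_large (2 * (8 + ln (/ eps)) / eps).
exists (maxn M1 M2) => m le_Mm k x0 x0_ge1 root.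
have [le_2a le_ab] := sizes m.
have ln2_b := ln2_bounds.
have n0_ge2 : 2 <= INR (n0 m) by have := INR_leq le_2a; rewrite [INR 2]/=; lra.
have ln_n0_ge : ln 2 <= ln (INR (n0 m)) by apply: ln_le; lra.
have ln_n0_le : ln (INR (n0 m)) <= ln (INR (n1 m)) by apply: ln_le; [lra | apply: INR_leq].
have k_eq : k = ln (INR (n1 m)) / ln (INR (n0 m)) by rewrite /k log2_div_log2.
have k_ge1 : 1 <= k.
  by rewrite k_eq; apply: (Rmult_le_reg_r (ln (INR (n0 m)))); [lra | field_simplify; lra].
have [t0_ge root_exp] := root_exp_equation k_ge1 x0_ge1 root.
rewrite log2_div_log2 Rmult_div_assoc.
apply: choice_number_Kbip_ge t0_ge _ => //.
- exact: M1P (leq_trans (leq_maxl _ _) le_Mm).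
- by have := M2P m (leq_trans (leq_maxr _ _) le_Mm); rewrite log2_div_log2.
- by rewrite (_ : _ * ln x0 = ln x0 / k) // k_eq; field; lra.
Qed.
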